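(* In the FIND setting of the context, fix a leaf cluster $\mathcal C_r$ and a consistent ordering of $\mathcal T_r^+$. If $\mathcal C_i$ and $\mathcal C_j$ are the two children of $\mathcal C_k$ in $\mathcal T_r^+$, then $\boldsymbol\Sigma_k(\mathcal B_i,\mathcal B_j)=\boldsymbol\Sigma(\mathcal B_i,\mathcal B_j)$ and $\boldsymbol\Sigma_k(\mathcal B_j,\mathcal B_i)=\boldsymbol\Sigma(\mathcal B_j,\mathcal B_i)$.
   Context: Setting (FIND). $\mathcal M$ is a finite set of mesh nodes; $\mathbf A$ is an invertible complex matrix indexed by $\mathcal M\times\mathcal M$, structurally symmetric ($A_{ij}\neq0\iff A_{ji}\neq0$); distinct nodes $i,j$ are connected if $A_{ij}\neq 0$. $\boldsymbol\Sigma$ is a complex matrix indexed by $\mathcal M\times\mathcal M$ with $\Sigma_{ij}=0$ whenever $i\neq j$ and $i,j$ are not connected. $\dagger$ is conjugate transpose, $\mathbf X^{-\dagger}=(\mathbf X^{-1})^\dagger$. $\mathbf X(X,Y)$ is the submatrix with rows in $X$, columns in $Y$. For a cluster $\mathcal C\subseteq\mathcal M$: boundary set $\mathcal B_{\mathcal C}=\{i\in\mathcal C: A_{ij}\neq 0\text{ for some } j\notin\mathcal C\}$, inner set $\mathcal I_{\mathcal C}=\mathcal C\setminus\mathcal B_{\mathcal C}$; for $\mathcal C_g$ write $\mathcal B_g,\mathcal I_g$. Cluster tree: $\mathcal T$ is a rooted binary tree of clusters with root $\mathcal M$, each non-leaf cluster the disjoint union of its two children. For a leaf $\mathcal C_r$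 with path $r=a_0,\dots,a_d$ (root) and $b_k$ the sibling of $a_k$, the augmented tree $\mathcal T_r^+$ has root $\mathcal C_{-r}=\mathcal M\setminus\mathcal C_r$; for $0\le k\le d-2$, $\mathcal C_{-a_k}=\mathcal M\setminus\mathcal C_{a_k}$ has children $\mathcal C_{b_k}$ and $\mathcal C_{-a_{k+1}}$, with $\mathcal C_{-a_{d-1}}$ identified with $\mathcal C_{b_{d-1}}$; each basic cluster $\mathcal C_{b_k}$ carries its subtree from $\mathcal T$. Private inner nodes: $\mathcal S_g=\mathcal I_g$ for a leaf $g$ of $\mathcal T_r^+$; $\mathcal S_g=\mathcal I_g\setminus(\mathcal I_i\cup\mathcal I_j)$ if $g$ has children $i,j$. Consistent ordering: a total order $g_1,\dots,g_m$ of the nodes of $\mathcal T_r^+$ with every node after all its descendants. Elimination: $\mathbf A_{g_1}=\mathbf A$, $\boldsymbol\Sigma_{g_1}=\boldsymbol\Sigma$; for each $g$ (with $\mathbf A_g(\mathcal S_g,\mathcal S_g)$ invertible), $\mathcal L_g=\mathbf A_g(\mathcal B_g,\mathcal S_g)\mathbf A_g(\mathcal S_g,\mathcal S_g)^{-1}$, $\mathbf L_g$ is the identity on $\mathcal M$ except $\mathbf L_g(\mathcal B_g,\mathcal S_g)=\mathcal L_g$, $\mathbf A_{g+}=\mathbf L_g^{-1}\mathbf A_g$, $\boldsymbol\Sigma_{g+}=\mathbf L_g^{-1}\boldsymbol\Sigma_g\mathbf L_g^{-\dagger}$, and $\mathbf A_{g_{t+1}}=\mathbf A_{g_t+}$,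 $\boldsymbol\Sigma_{g_{t+1}}=\boldsymbol\Sigma_{g_t+}$. Thus $\boldsymbol\Sigma_k$ is the matrix just before eliminating $\mathcal S_k$. *)

From HB Require Import structures.
From mathcomp Require Import all_boot all_order all_algebra.
From mathcomp Require Import reals complex.
Set Implicit Arguments. Unset Strict Implicit. Unset Printing Implicit Defensive.
Import Order.TTheory GRing.Theory Num.Theory.
Local Open Scope ring_scope.

(* Mesh nodes M = 'I_n ; clusters are subsets {set 'I_n}. *)

Inductive ctree (n : nat) : Type :=
| CLeaf of {set 'I_n}
| CNode of {set 'I_n} & ctree n & ctree n.
Arguments CLeaf {n}.
Arguments CNode {n}.

Definition cluster n (t : ctree n) : {set 'I_n} :=
  match t with CLeaf C => C | CNode C _ _ => C end.

Fixpoint wf_nodes n (t : ctree n) : bool :=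
  match t with
  | CLeaf _ => true
  | CNode C l r =>
      [&& C == cluster l :|: cluster r, [disjoint cluster l & cluster r],
          wf_nodes l & wf_nodes r]
  end.

Definition cluster_tree n (t : ctree n) : bool :=
  (cluster t == [set: 'I_n]) && wf_nodes t.

(* Positions of nodes: paths from the root, false = first child, true = second. *)
Fixpoint subtree n (t : ctree n) (q : seq bool) : option (ctree n) :=
  match q with
  | [::] => Some t
  | b :: q' =>
      match t with
      | CLeaf _ => None
      | CNode _ l r => subtree (if b then r else l) q'
      end
  end.

Definition is_node n (t : ctree n) (q : seq bool) : bool :=
  if subtree t q is Some _ then true else false.

Definition leaf_path n (t : ctree n) (q : seq bool) : bool :=
  if subtree t q is Some (CLeaf _) then true else false.

Definition clus n (t : ctree n) (q : seq bool) : {set 'I_n} :=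
  if subtree t q is Some s then cluster s else set0.

(* Augmented tree T_r^+ for the leaf C_r reached by path p.
   Descending from the root along p, acc is the augmented tree whose root is
   C_{-a} = M \ C_a for the current node a (None when a is the root).
   Going from a_{k+1} into child a_k (sibling b_k) we build
   C_{-a_k} = M \ C_{a_k} with children C_{b_k} and C_{-a_{k+1}};
   for the child a_{d-1} of the root, C_{-a_{d-1}} is identified with C_{b_{d-1}}. *)
Definition aug_join n (C : {set 'I_n}) (b : ctree n) (acc : option (ctree n)) :=
  match acc with None => b | Some a => CNode C b a end.

Fixpoint aug n (t : ctree n) (p : seq bool) (acc : option (ctree n))
  : option (ctree n) :=
  match t, p with
  | CLeaf _, [::] => acc
  | CNode _ l r, false :: p' => aug l p' (Some (aug_join (~: cluster l) r acc))
  | CNode _ l r, true :: p' => aug r p' (Some (aug_join (~: cluster r) l acc))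
  | _, _ => None
  end.

Definition consistent_ordering n (t : ctree n) (ord : seq (seq bool)) : Prop :=
  [/\ uniq ord,
      (forall q, (q \in ord) = is_node t q) &
      (forall q q', q \in ord -> q' \in ord -> prefix q q' -> q != q' ->
                    index q' ord < index q ord)%N].

Section Elim.
Variables (C : numClosedFieldType) (n : nat).

Definition bnd (A : 'M[C]_n) (X : {set 'I_n}) : {set 'I_n} :=
  [set i in X | [exists j, (j \notin X) && (A i j != 0)]].
Definition inner (A : 'M[C]_n) (X : {set 'I_n}) : {set 'I_n} := X :\: bnd A X.

Definition priv (A : 'M[C]_n) (t : ctree n) (g : seq bool) : {set 'I_n} :=
  match subtree t g with
  | Some (CLeaf X) => inner A X
  | Some (CNode X l r) => inner A X :\: (inner A (cluster l) :|: inner A (cluster r))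
  | None => set0
  end.

Definition subm (X Y : {set 'I_n}) (M : 'M[C]_n) : 'M[C]_(#|X|, #|Y|) :=
  \matrix_(i < #|X|, j < #|Y|) M (enum_val i) (enum_val j).

Definition embm (X Y : {set 'I_n}) (K : 'M[C]_(#|X|, #|Y|)) : 'M[C]_n :=
  \matrix_(i, j)
    match [pick k : 'I_#|X| | enum_val k == i], [pick l : 'I_#|Y| | enum_val l == j] with
    | Some k, Some l => K k l
    | _, _ => 0
    end.

Definition ctr (M : 'M[C]_n) : 'M[C]_n := (map_mx Num.conj M)^T.

Definition Lmat (Ag : 'M[C]_n) (B S : {set 'I_n}) : 'M[C]_n :=
  1%:M + embm (subm B S Ag *m invmx (subm S S Ag)).

Definition elim_step (A : 'M[C]_n) (t : ctree n)
    (st : 'M[C]_n * 'M[C]_n) (g : seq bool) : 'M[C]_n * 'M[C]_n :=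
  let L := Lmat st.1 (bnd A (clus t g)) (priv A t g) in
  (invmx L *m st.1, invmx L *m st.2 *m ctr (invmx L)).

Definition elim_upto (A Sig : 'M[C]_n) (t : ctree n) (ord : seq (seq bool)) (m : nat) :=
  foldl (elim_step A t) (A, Sig) (take m ord).

(* A_k, Sigma_k : the matrices just before eliminating S_k *)
Definition A_at A Sig t ord (k : seq bool) : 'M[C]_n :=
  (elim_upto A Sig t ord (index k ord)).1.
Definition Sigma_at A Sig t ord (k : seq bool) : 'M[C]_n :=
  (elim_upto A Sig t ord (index k ord)).2.

End Elim.

(* An elimination step at node g replaces Sigma by L^-1 Sigma L^-dagger with L^-1 = 1 - E,
   where E is supported on B_g x S_g.  Entry (x, y) with x or y outside C_g can only change
   through entries of Sigma joining S_g to the complement of C_g; these vanish, since S_g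
   consists of inner nodes, Sigma has the sparsity of A, and no earlier step touched them.
   So Sigma_k(x, y) <> Sigma(x, y) forces some node g preceding k with x, y in C_g.  For
   x in B_i and y in B_j, laminarity of the clusters makes g an ancestor of k or k itself,
   which a consistent ordering places after k. *)
From HB Require Import structures.
From mathcomp Require Import all_boot all_order all_algebra.
From mathcomp Require Import reals complex.
Import Order.TTheory GRing.Theory Num.Theory.
Local Open Scope ring_scope.
Set Implicit Arguments.
Unset Strict Implicit.

Section EliminationStep.
Variables (C : numClosedFieldType) (n : nat).
Implicit Types (A Ag M E : 'M[C]_n) (B S X Y : {set 'I_n}).

Lemma embm_supp X Y (K : 'M[C]_(#|X|, #|Y|)) x y :
  embm K x y != 0 -> (x \in X) && (y \in Y).
Proof.
rewrite /embm mxE.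
case: (pickP (fun k : 'I_#|X| => enum_val k == x)) => [k /eqP <-|_];
  case: (pickP (fun l : 'I_#|Y| => enum_val l == y)) => [l /eqP <-|_];
  by rewrite ?eqxx ?enum_valP.
Qed.

Lemma invmx_Lmat Ag B S : [disjoint B & S] ->
  invmx (Lmat Ag B S) = 1%:M - embm (subm B S Ag *m invmx (subm S S Ag)).
Proof.
move=> dBS; set E := embm _.
have EE : E *m E = 0.
  apply/matrixP => x y; rewrite !mxE big1 // => z _.
  have [Exz0|/embm_supp/andP[_ zS]] := eqVneq (E x z) 0; first by rewrite Exz0 mul0r.
  have [//|/embm_supp/andP[zB _]] := eqVneq (E z y) 0; last first.
    by rewrite (disjointFr dBS zB) in zS.
  by move->; rewrite mulr0.
have LE : Lmat Ag B S *m (1%:M - E) = 1%:M.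
  by rewrite /Lmat -/E mulmxDl mul1mx mulmxBr mulmx1 EE subr0 subrK.
have [Lu _] := mulmx1_unit LE.
by rewrite -[LHS]mulmx1 -{1}LE mulmxA mulVmx // mul1mx.
Qed.

Lemma unitri_mull_entry E M x y :
  (forall a, E x a != 0 -> M a y = 0) -> ((1%:M - E) *m M) x y = M x y.
Proof.
move=> EM; rewrite mulmxBl mul1mx !mxE big1 ?subr0 // => a _.
by have [->|/EM ->] := eqVneq (E x a) 0; rewrite (mul0r, mulr0).
Qed.

Lemma unitri_mulr_entry E M x y :
  (forall b, E y b != 0 -> M x b = 0) -> (M *m ctr (1%:M - E)) x y = M x y.
Proof.
move=> EM; have -> : ctr (1%:M - E) = 1%:M - ctr E.
  by apply/matrixP => i j; rewrite /ctr !mxE rmorphB /= rmorph_nat eq_sym.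
rewrite mulmxBr mulmx1 !mxE big1 ?subr0 // => b _; rewrite /ctr !mxE.
by have [->|/EM ->] := eqVneq (E y b) 0; rewrite (rmorph0, mul0r) ?mulr0.
Qed.

Lemma invmx_Lmat_conj_entry Ag M B S X x y :
  [disjoint B & S] -> B \subset X ->
  (forall a z, a \in S -> z \notin X -> M a z = 0 /\ M z a = 0) ->
  ~~ ((x \in X) && (y \in X)) ->
  (invmx (Lmat Ag B S) *m M *m ctr (invmx (Lmat Ag B S))) x y = M x y.
Proof.
move=> dBS BX MS xy; rewrite invmx_Lmat //; set E := embm _.
have EB u v : E u v != 0 -> (u \in B) && (v \in S) by apply: embm_supp.
have outB u : u \notin X -> forall v, E u v = 0.
  move=> uX v; apply/eqP; apply: contraNT uX => /EB/andP[uB _].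
  exact: subsetP BX u uB.
have [xX|xX] := boolP (x \in X).
  have yX : y \notin X by rewrite xX in xy.
  rewrite unitri_mulr_entry => [|b]; last by rewrite outB ?eqxx.
  by apply: unitri_mull_entry => a /EB/andP[_ aS]; case: (MS a y aS yX).
rewrite unitri_mulr_entry => [|b /EB/andP[_ bS]].
  by apply: unitri_mull_entry => a; rewrite outB ?eqxx.
rewrite unitri_mull_entry => [|a]; last by rewrite outB ?eqxx.
by case: (MS b x bS xX).
Qed.

Lemma inner_outside_eq0 A X a z :
  a \in inner A X -> z \notin X -> A a z = 0.
Proof.
rewrite !inE => /andP[aNB aX] zX; apply/eqP; apply: contraNT aNB => Aaz.
by rewrite aX /=; apply/existsP; exists z; rewrite zX.
Qed.

Lemma bnd_sub A X : bnd A X \subset X.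
Proof. by apply/subsetP => z; rewrite inE => /andP[]. Qed.

Lemma priv_sub_inner A t g : priv A t g \subset inner A (clus t g).
Proof.
rewrite /priv /clus; case: (subtree t g) => [[X|X l r]|] //=.
  exact: subsetDl.
exact: sub0set.
Qed.

Lemma priv_sub_clus A t g : priv A t g \subset clus t g.
Proof. exact: subset_trans (priv_sub_inner A t g) (subsetDl _ _). Qed.

Lemma disjoint_bnd_priv A t g :
  [disjoint bnd A (clus t g) & priv A t g].
Proof.
rewrite disjoint_sym disjoints_subset.
by apply: subset_trans (priv_sub_inner A t g) _; apply: subsetDr.
Qed.

End EliminationStep.

Section ClusterTrees.
Variable n : nat.
Implicit Types t : ctree n.

Lemma subtree_cat t q w :
  subtree t (q ++ w) = if subtree t q is Some s then subtree s w else None.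
Proof. by elim: q t => [|b q IH] [X|X l r] //=. Qed.

Lemma wf_subtree t q s : wf_nodes t -> subtree t q = Some s -> wf_nodes s.
Proof.
elim: q t => [|b q IH] [X|X l r] //=; try by move=> w [<-].
by move=> /and4P[_ _ wl wr]; case: b; apply: IH.
Qed.

Lemma clus_sub t q : wf_nodes t -> clus t q \subset cluster t.
Proof.
elim: t q => [X|X l IHl r IHr] [|b q] //= w; rewrite /clus /=.
  exact: sub0set.
move: w => /and4P[/eqP -> _ wl wr].
by case: b; [apply: subset_trans (IHr q wr) (subsetUr _ _)
            |apply: subset_trans (IHl q wl) (subsetUl _ _)].
Qed.

Lemma clus_prefix t q q' : wf_nodes t -> prefix q q' -> clus t q' \subset clus t q.
Proof.
move=> w /prefixP[u ->]; rewrite {1}/clus subtree_cat.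
case E: (subtree t q) => [s|]; last exact: sub0set.
by have := clus_sub u (wf_subtree w E); rewrite /clus E.
Qed.

Lemma clus_laminar t q q' x : wf_nodes t ->
  x \in clus t q -> x \in clus t q' -> prefix q q' || prefix q' q.
Proof.
elim: t q q' => [X|X l IHl r IHr] [|b q] [|b' q'] //=; rewrite /clus /=;
  try by rewrite inE.
move=> /and4P[_ dlr wl wr].
case: b b' => [] [] /= Hx Hx'; try by [apply: IHr | apply: IHl].
- move: (subsetP (clus_sub q wr) _ Hx) (subsetP (clus_sub q' wl) _ Hx').
  by move=> xr /(disjointFr dlr); rewrite xr.
- move: (subsetP (clus_sub q wl) _ Hx) (subsetP (clus_sub q' wr) _ Hx').
  by move=> /(disjointFr dlr) ->.
Qed.

Lemma disjoint_clus_children t k : wf_nodes t ->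
  [disjoint clus t (rcons k false) & clus t (rcons k true)].
Proof.
move=> w; rewrite /clus -!cats1 !subtree_cat.
case E: (subtree t k) => [[X|X l r]|] /=; try by rewrite -setI_eq0 set0I.
by case/and4P: (wf_subtree w E) => _ + _ _; case: (l); case: (r).
Qed.

Lemma prefix_rcons_inv (k g : seq bool) b :
  prefix g (rcons k b) -> g = rcons k b \/ prefix g k.
Proof.
move/prefixP => [w]; case/lastP: w => [|w c]; first by rewrite cats0; left.
rewrite -rcons_cat => /rcons_inj[-> _]; right; exact: prefix_prefix.
Qed.

Lemma common_clus_children_prefix t k g x y : wf_nodes t ->
  x \in clus t (rcons k false) -> y \in clus t (rcons k true) ->
  x \in clus t g -> y \in clus t g -> prefix g k.
Proof.
move=> w xi yj xg yg; have dij := disjoint_clus_children k w.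
have [kg|gk] := orP (clus_laminar w xi xg).
  by rewrite (disjointFr dij (subsetP (clus_prefix w kg) _ yg)) in yj.
case: (prefix_rcons_inv gk) => [Eg|//].
by rewrite Eg in yg; rewrite (disjointFr dij yg) in yj.
Qed.

(* Invariant of [aug]: the accumulated tree is well formed and its root is the
   complement of the current cluster (or the current cluster is the whole mesh). *)
Definition aug_acc_ok (X : {set 'I_n}) (acc : option (ctree n)) : bool :=
  if acc is Some a then wf_nodes a && (cluster a == ~: X) else X == setT.

Lemma aug_acc_ok_join l r acc :
  [disjoint cluster l & cluster r] -> wf_nodes r ->
  aug_acc_ok (cluster l :|: cluster r) acc ->
  aug_acc_ok (cluster l) (Some (aug_join (~: cluster l) r acc)).
Proof.
move=> dlr wr; have rl : cluster r \subset ~: cluster l.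
  by rewrite -disjoints_subset disjoint_sym.
case: acc => [a /andP[wa /eqP ca]|/eqP lr] /=; rewrite ?wr ?eqxx ?andbT /=.
  rewrite wa ca disjoints_subset setCK subsetUr andbT setCU.
  by rewrite setUIr setUCr setIT (setUidPr rl) eqxx.
rewrite eqEsubset rl /=; apply/subsetP => z; rewrite inE => /negbTE zl.
by move: (in_setT z); rewrite -lr in_setU zl.
Qed.

Lemma aug_wf t p acc Tp : wf_nodes t -> aug_acc_ok (cluster t) acc ->
  aug t p acc = Some Tp -> wf_nodes Tp.
Proof.
elim: t p acc => [X|X l IHl r IHr] [|[] p] acc //=.
  by move=> _; case: acc => [a /andP[wa _] [<-]|].
- case/and4P=> /eqP eX dlr wl wr Hacc; apply: IHr wr _.
  by apply: aug_acc_ok_join; rewrite 1?disjoint_sym // setUC -eX.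
- case/and4P=> /eqP eX dlr wl wr Hacc; apply: IHl wl _.
  by apply: aug_acc_ok_join; rewrite // -eX.
Qed.

End ClusterTrees.

Section Elimination.
Variables (C : numClosedFieldType) (n : nat) (A Sig : 'M[C]_n).
Variables (t : ctree n) (ord : seq (seq bool)).
Hypothesis A_sym : forall i j, (A i j != 0) = (A j i != 0).
Hypothesis Sig_sparse : forall i j, i != j -> A i j = 0 -> Sig i j = 0.
Hypothesis wf_t : wf_nodes t.
Hypothesis uniq_ord : uniq ord.
Hypothesis desc_first : forall q q', q \in ord -> q' \in ord -> prefix q q' ->
  q != q' -> (index q' ord < index q ord)%N.

Lemma earlier_not_prefix g g' : g \in ord -> g' \in ord ->
  (index g' ord < index g ord)%N -> ~~ prefix g' g.
Proof.
move=> go g'o lt; apply/negP => g'g.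
have [Eg|ne] := eqVneq g' g; first by rewrite Eg ltnn in lt.
by have := desc_first g'o go g'g ne; rewrite ltnNge (ltnW lt).
Qed.

Lemma earlier_clus_no_straddle g g' a z : g \in ord -> g' \in ord ->
  (index g' ord < index g ord)%N -> a \in clus t g -> z \notin clus t g ->
  ~~ ((a \in clus t g') && (z \in clus t g')).
Proof.
move=> go g'o lt ag zg; apply/andP => -[ag' zg'].
have [gg'|g'g] := orP (clus_laminar wf_t ag ag').
  by rewrite (subsetP (clus_prefix wf_t gg') z zg') in zg.
by move: (earlier_not_prefix go g'o lt); rewrite g'g.
Qed.

Lemma priv_Sig_eq0 g a z : a \in priv A t g -> z \notin clus t g ->
  Sig a z = 0 /\ Sig z a = 0.
Proof.
move=> aS zg; have aI := subsetP (priv_sub_inner A t g) a aS.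
have Aaz := inner_outside_eq0 aI zg.
have Aza : A z a = 0 by apply/eqP/negbNE; rewrite A_sym Aaz eqxx.
have az : a != z.
  by apply: contraNneq zg => <-; apply: subsetP (priv_sub_clus A t g) a aS.
by rewrite !Sig_sparse // eq_sym.
Qed.

Lemma Sigma_elim_upto_eq m x y : (m <= size ord)%N ->
  (forall g, g \in ord -> (index g ord < m)%N ->
     ~~ ((x \in clus t g) && (y \in clus t g))) ->
  (elim_upto A Sig t ord m).2 x y = Sig x y.
Proof.
elim: m x y => [|m IH] x y Hm untouched; first by rewrite /elim_upto take0.
set g := nth [::] ord m.
have go : g \in ord := mem_nth [::] Hm.
have ig : index g ord = m := index_uniq [::] Hm uniq_ord.
rewrite /elim_upto (take_nth [::] Hm) foldl_rcons -/(elim_upto A Sig t ord m).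
rewrite /elim_step /= (@invmx_Lmat_conj_entry _ _ _ _ _ _ (clus t g)).
- by apply: IH (ltnW Hm) _ => g' g'o lt; apply: untouched; rewrite // ltnW.
- exact: disjoint_bnd_priv.
- exact: bnd_sub.
- move=> a z aS zg; have ag := subsetP (priv_sub_clus A t g) a aS.
  have no_straddle g' : g' \in ord -> (index g' ord < m)%N ->
      ~~ ((a \in clus t g') && (z \in clus t g')).
    by move=> g'o lt; apply: earlier_clus_no_straddle go g'o _ ag zg; rewrite ig.
  have [Saz Sza] := priv_Sig_eq0 aS zg.
  by split; rewrite IH ?(ltnW Hm) // => g' g'o lt; rewrite andbC; apply: no_straddle.
- by apply: untouched; rewrite ?ig.
Qed.

End Elimination.

Theorem corollary1 (R : realType) (n : nat) (A Sig : 'M[R[i]]_n)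
    (T : ctree n) (p : seq bool) (Tp : ctree n) (ord : seq (seq bool)) :
  A \in unitmx ->
  (forall i j, (A i j != 0) = (A j i != 0)) ->
  (forall i j, i != j -> A i j = 0 -> Sig i j = 0) ->
  cluster_tree T ->
  leaf_path T p ->
  aug T p None = Some Tp ->
  consistent_ordering Tp ord ->
  (forall g, g \in ord ->
     subm (priv A Tp g) (priv A Tp g) (A_at A Sig Tp ord g) \in unitmx) ->
  forall k Ck Ti Tj, subtree Tp k = Some (CNode Ck Ti Tj) ->
  let Bi := bnd A (clus Tp (rcons k false)) in
  let Bj := bnd A (clus Tp (rcons k true)) in
  subm Bi Bj (Sigma_at A Sig Tp ord k) = subm Bi Bj Sig /\
  subm Bj Bi (Sigma_at A Sig Tp ord k) = subm Bj Bi Sig.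
Proof.
move=> _ A_sym Sig_sparse /andP[/eqP cT wfT] _ aT [uord memord desc] _.
move=> k Ck Ti Tj sk Bi Bj.
have wfTp : wf_nodes Tp by apply: aug_wf wfT _ aT; rewrite /aug_acc_ok cT.
have ko : k \in ord by rewrite memord /is_node sk.
have off_block x y : x \in clus Tp (rcons k false) -> y \in clus Tp (rcons k true) ->
    Sigma_at A Sig Tp ord k x y = Sig x y /\ Sigma_at A Sig Tp ord k y x = Sig y x.
  move=> xi yj; have untouched g : g \in ord -> (index g ord < index k ord)%N ->
      ~~ ((x \in clus Tp g) && (y \in clus Tp g)).
    move=> go lt; apply/andP => -[xg yg].
    have := earlier_not_prefix desc ko go lt.
    by rewrite (common_clus_children_prefix wfTp xi yj xg yg).
  have := Sigma_elim_upto_eq A_sym Sig_sparse wfTp uord desc (index_size k ord).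
  rewrite /Sigma_at => untouched_eq; split; apply: untouched_eq => //.
  by move=> g go lt; rewrite andbC; apply: untouched.
split; apply/matrixP => u v; rewrite !mxE.
  by apply: (off_block _ _ _ _).1; apply: subsetP (bnd_sub _ _) _ (enum_valP _).
by apply: (off_block _ _ _ _).2; apply: subsetP (bnd_sub _ _) _ (enum_valP _).
Qed.
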